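(* Let $\mathcal{S}$ be a relational structure admitting an injective unary FA-presentation $(a^*,\phi)$, and let $R$ be a binary relation in the signature of $\mathcal{S}$. Let $R^+$ denote the transitive closure of $R$. Then $\Lambda(R^+,\phi)=\{(u,v)\in a^*\times a^* : (u\phi,v\phi)\in R^+\}$ is regular. Hence $\mathcal{S}$ augmented by the relation $R^+$ is also unary FA-presentable.
   Context: For words $w_1,\dots,w_r$ over a finite alphabet $A$, $\mathrm{conv}(w_1,\dots,w_r)$ is the word over $(A\cup\{\$\})^r$ (with $\$\notin A$) whose $j$-th letter is the tuple of $j$-th letters of the $w_i$, shorter words being padded at the end with $\$$. A relation $X\subseteq (A^* )^r$ is regular if $\{\mathrm{conv}(w_1,\dots,w_r):(w_1,\dots,w_r)\in X\}$ is a regular language. An FA-presentation of a relational structure $\mathcal{S}=(S,R_1,\dots,R_n)$ is a pair $(L,\phi)$ with $L$ a regular language over a finite alphabet and $\phi:L\to S$ surjective such that for every relation $R\in\{=,R_1,\dots,R_n\}$ of arity $r$ the relation $\Lambda(R,\phi)=\{(w_1,\dots,w_r)\in L^r : R(w_1\phi,\dots,w_r\phi)\}$ is regular. It is unary if $L$ is over a one-letter alphabet $\{a\}$; a structure is unary FA-presentable if it admits a unary FA-presentation. An injective unary FA-presentation $(a^*,\phi)$ is one with $L=a^*$ and $\phi$ injective. *)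

From Stdlib Require Import Relations List.
From mathcomp Require Import all_boot.
Set Implicit Arguments. Unset Strict Implicit. Unset Printing Implicit Defensive.

Definition regular_lang (Sigma : finType) (L : seq Sigma -> Prop) : Prop :=
  exists (Q : finType) (q0 : Q) (delta : Q -> Sigma -> Q) (F : pred Q),
    forall w, L w <-> F (foldl delta q0 w).

(* conv(w_1,...,w_r): letters are r-tuples over A ∪ {$}, with None = $. *)
Definition conv (A : finType) (r : nat) (ws : 'I_r -> seq A)
  : seq {ffun 'I_r -> option A} :=
  mkseq (fun j => [ffun i => onth (ws i) j]) (\max_(i < r) size (ws i)).

Definition regular_rel (A : finType) (r : nat) (X : ('I_r -> seq A) -> Prop) : Prop :=
  regular_lang (fun w => exists ws, X ws /\ w = conv ws).

Definition sig_t (S : Type) := list {r : nat & ('I_r -> S) -> Prop}.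

Definition of2 (S : Type) (x y : S) : 'I_2 -> S :=
  fun i => if val i == 0 then x else y.

Definition binrel (S : Type) (R : S -> S -> Prop) : ('I_2 -> S) -> Prop :=
  fun xs => R (xs ord0) (xs ord_max).

Definition Lambda (A : finType) (S : Type) (L : seq A -> Prop)
  (phi : {w : seq A | L w} -> S) (r : nat) (R : ('I_r -> S) -> Prop)
  : ('I_r -> seq A) -> Prop :=
  fun ws => exists h : (forall i, L (ws i)),
    R (fun i => phi (exist _ (ws i) (h i))).

Definition FA_presentation (S : Type) (sig : sig_t S) (A : finType)
  (L : seq A -> Prop) (phi : {w : seq A | L w} -> S) : Prop :=
  [/\ regular_lang L,
      (forall x : S, exists w, phi w = x),
      regular_rel (Lambda phi (binrel (@eq S))) &
      (forall R, In R sig -> regular_rel (Lambda phi (projT2 R)))].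

Definition unary_FA_presentable (S : Type) (sig : sig_t S) : Prop :=
  exists (L : seq unit -> Prop) (phi : {w : seq unit | L w} -> S),
    FA_presentation sig phi.

From HB Require Import structures.
From Stdlib Require Import Relations List ClassicalEpsilon FunctionalExtensionality.
From mathcomp Require Import all_boot zify.
Set Implicit Arguments. Unset Strict Implicit. Unset Printing Implicit Defensive.

(* Reading the word a^k as the number k, the relation R becomes a relation E
   on nat whose convolutions [conv2 x y] are recognised by a DFA.  Fix a cut n.
   An E-path from x to y alternates between stretches below n and stretches
   at or above n.  The DFA sees a jump from u < n up to some v >= n only
   through the state reached on [conv2 u n] (an up token), a jump down to
   v < n only through the state reached on [conv2 n v] (a down token), and the
   whole region above n only through the state reached after n diagonal
   letters.  So E^+(x, y) is reachability between finitely many token nodes,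
   where the edges from stretches below n are determined by the prefix of
   length n of [conv2 x y] and the edges from stretches above n by the
   diagonal state and the remaining suffix.  Together with the shape of the
   prefix, the finitely many possible edge sets below the cut refine the
   Myhill-Nerode congruence of the language of E^+, which is therefore
   regular. *)

Section Closures.
Variables (A B : Type) (R : relation A) (R' : relation B).

Lemma clos_trans_map (f : A -> B) :
  (forall a b, R a b -> R' (f a) (f b)) ->
  forall a b, clos_trans A R a b -> clos_trans B R' (f a) (f b).
Proof.
move=> Hf a b; elim=> [u v Huv|u v w _ IH1 _ IH2]; first exact/t_step/Hf.
exact: t_trans IH1 IH2.
Qed.

Lemma clos_refl_trans_map (f : A -> B) :
  (forall a b, R a b -> R' (f a) (f b)) ->
  forall a b, clos_refl_trans A R a b -> clos_refl_trans B R' (f a) (f b).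
Proof.
move=> Hf a b; elim=> [u v Huv|u|u v w _ IH1 _ IH2]; first exact/rt_step/Hf.
- exact: rt_refl.
- exact: rt_trans IH1 IH2.
Qed.

Lemma clos_t_rt a b c :
  clos_trans A R a b -> clos_refl_trans A R b c -> clos_trans A R a c.
Proof.
move=> Hab Hbc; elim: (clos_rt_rtn1 _ _ _ _ Hbc) => // d e Hde _ IH.
exact: t_trans IH (t_step _ _ _ _ Hde).
Qed.

Lemma clos_rt_step_rt a b c d :
  clos_refl_trans A R a b -> R b c -> clos_refl_trans A R c d ->
  clos_trans A R a d.
Proof.
move=> Hab Hbc; apply: clos_t_rt.
exact: clos_rt_t Hab (t_step _ _ _ _ Hbc).
Qed.

Lemma clos_trans_pullback (f : B -> A) : (forall a, exists b, f b = a) ->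
  forall b b', clos_trans A R (f b) (f b') <->
               clos_trans B (fun c c' => R (f c) (f c')) b b'.
Proof.
move=> f_surj b b'; split; last first.
  by elim=> [c c' Hcc'|c d c' _ IH1 _ IH2]; [apply: t_step | apply: t_trans IH2].
move Efb : (f b) => a; move Efb' : (f b') => a' Haa'.
elim: Haa' b b' Efb Efb' => [u v Huv|u v w _ IH1 _ IH2] c c' Ec Ec'.
- by apply: t_step; rewrite Ec Ec'.
- have [d Ed] := f_surj v.
  exact: t_trans (IH1 c d Ec Ed) (IH2 d c' Ed Ec').
Qed.

End Closures.

Lemma clos_trans_ext A (R R' : relation A) :
  (forall a b, R a b <-> R' a b) ->
  forall a b, clos_trans A R a b <-> clos_trans A R' a b.
Proof. by move=> HR a b; split; apply: (clos_trans_map (f := id)) => c d /HR. Qed.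

Definition classic_bool (P : Prop) : bool :=
  if excluded_middle_informative P then true else false.

Lemma classic_boolP (P : Prop) : reflect P (classic_bool P).
Proof.
by rewrite /classic_bool; case: excluded_middle_informative => ?; constructor.
Qed.

Lemma regular_lang_ext (Sigma : finType) (L L' : seq Sigma -> Prop) :
  (forall w, L w <-> L' w) -> regular_lang L' -> regular_lang L.
Proof.
move=> HLL' [Q [q0 [delta [F HF]]]]; exists Q, q0, delta, F => w.
by rewrite HLL' HF.
Qed.

(* Myhill-Nerode: the values of [g] serve as the states of a DFA for [L]. *)
Lemma regular_of_finite_congruence (Sigma X : finType) (L : seq Sigma -> Prop)
    (g : seq Sigma -> X) :
  (forall u u' v, g u = g u' -> L (u ++ v) -> L (u' ++ v)) -> regular_lang L.
Proof.
move=> Hg.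
pose rep x := epsilon (inhabits [::]) (fun u => g u = x).
have g_rep u : g (rep (g u)) = g u.
  by apply: (epsilon_spec _ (fun w => g w = g u)); exists u.
have L_rep u v : L (rep (g u) ++ v) <-> L (u ++ v).
  by split; apply: Hg; rewrite g_rep.
pose delta x l := g (rep x ++ [:: l]).
exists X, (g [::]), delta, (fun x => classic_bool (L (rep x))).
have run_class w : exists u, foldl delta (g [::]) w = g u /\
                             forall v, L (u ++ v) <-> L (w ++ v).
  elim/last_ind: w => [|w l [u [Hu HLu]]]; first by exists [::].
  exists (rep (g u) ++ [:: l]); rewrite foldl_rcons Hu; split=> // v.
  by rewrite -catA L_rep HLu cat_rcons.
move=> w; have [u [-> HLu]] := run_class w.
have := HLu [::]; have := L_rep u [::]; rewrite !cats0.
by case: classic_boolP => HL; split=> //; tauto.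
Qed.

(** * Convolutions of unary words *)

Definition letter := {ffun 'I_2 -> option unit}.

Definition mk_letter (p q : bool) : letter :=
  [ffun i : 'I_2 => if (if val i == 0 then p else q) then Some tt else None].

Definition both := mk_letter true true.
Definition only1 := mk_letter true false.
Definition only2 := mk_letter false true.

Definition conv2 (a b : nat) : seq letter :=
  nseq (minn a b) both ++ nseq (a - b) only1 ++ nseq (b - a) only2.

Definition len1 (w : seq letter) := count (fun l : letter => l ord0 != None) w.
Definition len2 (w : seq letter) := count (fun l : letter => l ord_max != None) w.

Lemma conv2_le a b : a <= b -> conv2 a b = nseq a both ++ nseq (b - a) only2.
Proof. by move=> le_ab; rewrite /conv2 (minn_idPl le_ab) (eqP le_ab). Qed.

Lemma conv2_ge a b : b <= a -> conv2 a b = nseq b both ++ nseq (a - b) only1.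
Proof. by move=> le_ba; rewrite /conv2 (minn_idPr le_ba) (eqP le_ba) cats0. Qed.

Lemma conv2_diag n : conv2 n n = nseq n both.
Proof. by rewrite conv2_le // subnn cats0. Qed.

Lemma conv2_0l n : conv2 0 n = nseq n only2.
Proof. by rewrite conv2_le // subn0. Qed.

Lemma conv2_0r n : conv2 n 0 = nseq n only1.
Proof. by rewrite conv2_ge // subn0. Qed.

Lemma size_conv2 a b : size (conv2 a b) = maxn a b.
Proof. by rewrite /conv2 !size_cat !size_nseq; lia. Qed.

Lemma len1_conv2 a b : len1 (conv2 a b) = a.
Proof. by rewrite /len1 /conv2 !count_cat !count_nseq !ffunE /=; lia. Qed.

Lemma len2_conv2 a b : len2 (conv2 a b) = b.
Proof. by rewrite /len2 /conv2 !count_cat !count_nseq !ffunE /=; lia. Qed.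

Lemma conv2_inj a b a' b' : conv2 a b = conv2 a' b' -> a = a' /\ b = b'.
Proof.
move=> E; split; first by rewrite -(len1_conv2 a b) E len1_conv2.
by rewrite -(len2_conv2 a b) E len2_conv2.
Qed.

Lemma cat_conv2 a b c d : (0 < c -> b <= a) -> (0 < d -> a <= b) ->
  conv2 a b ++ conv2 c d = conv2 (a + c) (b + d).
Proof.
case: (posnP c) => [-> _|c_gt0 /(_ isT) le_ba];
  case: (posnP d) => [-> _|d_gt0 /(_ isT) le_ab].
- by rewrite !addn0 [conv2 0 0]/= cats0.
- rewrite (conv2_le le_ab) (@conv2_le 0) // (@conv2_le (a + 0)); last lia.
  by rewrite -catA -nseqD addn0; congr (_ ++ nseq _ _); lia.
- rewrite (conv2_ge le_ba) (@conv2_ge c) // (@conv2_ge _ (b + 0)); last lia.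
  by rewrite -catA -nseqD addn0; congr (_ ++ nseq _ _); lia.
- have ->: b = a by lia.
  by rewrite conv2_diag /conv2 catA -nseqD; congr (nseq _ _ ++ nseq _ _ ++ nseq _ _); lia.
Qed.

Lemma conv2_cat_split u v a b : u ++ v = conv2 a b ->
  u = conv2 (minn a (size u)) (minn b (size u)) /\
  v = conv2 (a - size u) (b - size u).
Proof.
move=> Euv; have n_le : size u <= maxn a b.
  by rewrite -size_conv2 -Euv size_cat leq_addr.
move: n_le Euv; set n := size u => n_le Euv.
have Esplit : conv2 a b = conv2 (minn a n) (minn b n) ++ conv2 (a - n) (b - n).
  by rewrite cat_conv2; [congr conv2 | ..]; lia.
move: Euv; rewrite Esplit => /eqP.
rewrite eqseq_cat; last by rewrite size_conv2 -/n; lia.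
by case/andP => /eqP -> /eqP ->.
Qed.

Lemma nth_conv2 a b j :
  j < maxn a b -> nth both (conv2 a b) j = mk_letter (j < a) (j < b).
Proof.
move=> lt_j; case: (leqP a b) => [le_ab|lt_ba].
- rewrite conv2_le // nth_cat size_nseq !nth_nseq.
  have [lt_ja|le_aj] := ltnP j a; first by rewrite (leq_trans lt_ja le_ab).
  by rewrite ifT; [have -> : j < b by lia|lia].
- rewrite conv2_ge ?(ltnW lt_ba) // nth_cat size_nseq !nth_nseq.
  have [lt_jb|le_bj] := ltnP j b; first by rewrite (leq_trans lt_jb (ltnW lt_ba)).
  by rewrite ifT; [have -> : j < a by lia|lia].
Qed.

Lemma unit_seqE (l : seq unit) : l = nseq (size l) tt.
Proof. by elim: l => [|[] l IH] //=; rewrite -IH. Qed.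

Lemma conv_unary (ws : 'I_2 -> seq unit) :
  conv ws = conv2 (size (ws ord0)) (size (ws ord_max)).
Proof.
have Emax : \max_(i < 2) size (ws i) = maxn (size (ws ord0)) (size (ws ord_max)).
  rewrite big_ord_recr /= big_ord_recr /= big_ord0 max0n.
  by congr (maxn (size (ws _)) _); apply: val_inj.
apply: (@eq_from_nth _ both); first by rewrite size_mkseq size_conv2 Emax.
move=> j; rewrite size_mkseq Emax => lt_j.
rewrite nth_mkseq ?Emax // nth_conv2 //; apply/ffunP => i.
rewrite !ffunE (unit_seqE (ws i)).
have -> : forall k m, onth (nseq k tt) m = if m < k then Some tt else None.
  by elim=> [|k IH] [|m] //=.
by case: i => [[|[|k]] lt_i] //=; congr (if j < size (ws _) then _ else _);
  apply: val_inj.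
Qed.

(** * The cut graph *)

Inductive node (Q : Type) := Start | Stop | Up of Q | Down of Q.
Arguments Start {Q}.
Arguments Stop {Q}.

Definition node_code Q (a : node Q) : bool * option Q :=
  match a with
  | Start => (false, None) | Stop => (true, None)
  | Up t => (true, Some t) | Down t => (false, Some t)
  end.

Definition node_decode Q (c : bool * option Q) : node Q :=
  match c with
  | (false, None) => Start | (true, None) => Stop
  | (true, Some t) => Up t | (false, Some t) => Down t
  end.

Lemma node_codeK Q : cancel (@node_code Q) (@node_decode Q).
Proof. by case. Qed.

HB.instance Definition _ (Q : finType) :=
  Finite.copy (node Q) (can_type (@node_codeK Q)).

Section CutGraph.
Variables (Q : finType) (q0 : Q) (delta : Q -> letter -> Q) (F : pred Q).

Definition conv2_rel : relation nat := fun x y => F (foldl delta q0 (conv2 x y)).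
Local Notation E := conv2_rel.

Definition diag_state n := foldl delta q0 (nseq n both).
Definition up_token n u := foldl delta q0 (conv2 u n).
Definition down_token n v := foldl delta q0 (conv2 n v).

Definition low_rel n : relation nat := fun x y => [/\ x < n, y < n & E x y].
Definition high_rel s : relation nat := fun p q => F (foldl delta s (conv2 p q)).

Lemma E_up_token n u v : u <= n -> n <= v ->
  E u v = F (foldl delta (up_token n u) (nseq (v - n) only2)).
Proof.
move=> le_un le_nv; rewrite /E /up_token -conv2_0l -foldl_cat cat_conv2 //.
by congr (F (foldl _ _ (conv2 _ _))); lia.
Qed.

Lemma E_down_token n u v : v <= n -> n <= u ->
  E u v = F (foldl delta (down_token n v) (nseq (u - n) only1)).
Proof.
move=> le_vn le_nu; rewrite /E /down_token -conv2_0r -foldl_cat cat_conv2 //.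
by congr (F (foldl _ _ (conv2 _ _))); lia.
Qed.

Lemma E_shift n p q : E (n + p) (n + q) = high_rel (diag_state n) p q.
Proof. by rewrite /conv2_rel -cat_conv2 // conv2_diag foldl_cat. Qed.

Definition below n x := if x < n then Some x else None.
Definition above n x := if n <= x then Some (x - n) else None.

Lemma below_Some n x p : below n x = Some p -> x = p /\ p < n.
Proof. by rewrite /below; case: ifP => // lt_xn [<-]. Qed.

Lemma above_Some n x p : above n x = Some p -> x = n + p.
Proof. by rewrite /above; case: ifP => // le_nx [<-]; rewrite subnKC. Qed.

Lemma below_lt n x : x < n -> below n x = Some x.
Proof. by rewrite /below => ->. Qed.

Lemma above_ge n x : n <= x -> above n x = Some (x - n).
Proof. by rewrite /above => ->. Qed.

Lemma below_minn n x : below n (minn x n) = below n x.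
Proof.
rewrite /below; do 2 case: ifP => ?; rewrite //; try congr Some; lia.
Qed.

Lemma above_minn n x : above n x = if n <= minn x n then Some (x - n) else None.
Proof. by rewrite /above; congr (if _ then _ else _); apply/idP/idP; lia. Qed.

(* [Up t]: a stretch below the cut is about to be left, with up token [t];
   [Down t]: a stretch below the cut has just been entered, with down token [t].
   Each maximal stretch on one side of the cut becomes a single edge. *)
Definition low_edge n (xo yo : option nat) (a b : node Q) : Prop :=
  match a, b with
  | Start, Stop =>
      exists p q, [/\ xo = Some p, yo = Some q & clos_trans nat (low_rel n) p q]
  | Start, Up t' =>
      exists p u, [/\ xo = Some p, u < n, clos_refl_trans nat (low_rel n) p u
                    & up_token n u = t']
  | Down t, Stop =>
      exists v q, [/\ yo = Some q, v < n, down_token n v = t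
                    & clos_refl_trans nat (low_rel n) v q]
  | Down t, Up t' =>
      exists v u, [/\ v < n, u < n, down_token n v = t,
                      clos_refl_trans nat (low_rel n) v u & up_token n u = t']
  | _, _ => False
  end.

Definition high_edge s (xo yo : option nat) (a b : node Q) : Prop :=
  match a, b with
  | Start, Stop =>
      exists p q, [/\ xo = Some p, yo = Some q & clos_trans nat (high_rel s) p q]
  | Start, Down t' =>
      exists p u, [/\ xo = Some p, clos_refl_trans nat (high_rel s) p u
                    & F (foldl delta t' (nseq u only1))]
  | Up t, Stop =>
      exists v q, [/\ yo = Some q, F (foldl delta t (nseq v only2))
                    & clos_refl_trans nat (high_rel s) v q]
  | Up t, Down t' =>
      exists v u, [/\ F (foldl delta t (nseq v only2)),
                      clos_refl_trans nat (high_rel s) v u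
                    & F (foldl delta t' (nseq u only1))]
  | _, _ => False
  end.

Definition cut_edge n x y : relation (node Q) := fun a b =>
  low_edge n (below n x) (below n y) a b \/
  high_edge (diag_state n) (above n x) (above n y) a b.

Lemma low_rel_sub n x y : low_rel n x y -> E x y.
Proof. by case. Qed.

Lemma high_rel_sub n p q : high_rel (diag_state n) p q -> E (n + p) (n + q).
Proof. by rewrite E_shift. Qed.

Definition reached n x y (a : node Q) : Prop :=
  match a with
  | Start => True
  | Stop => clos_trans nat E x y
  | Up t => exists u, [/\ u < n, clos_refl_trans nat E x u & up_token n u = t]
  | Down t => exists u, [/\ n <= u, clos_refl_trans nat E x u
                         & F (foldl delta t (nseq (u - n) only1))]
  end.

Lemma low_edge_reached n x y a b :
  low_edge n (below n x) (below n y) a b -> reached n x y a -> reached n x y b.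
Proof.
have low_t := clos_trans_map (low_rel_sub (n := n)).
have low_rt := clos_refl_trans_map (low_rel_sub (n := n)).
case: a b => [| |t|t] [| |t'|t'] //=.
- by case=> p [q [/below_Some[-> _] /below_Some[-> _] /low_t]].
- case=> p [u [/below_Some[-> _] lt_un /low_rt Hpu <-]] _.
  by exists u.
- case=> v [q [/below_Some[-> _] lt_vn <- /low_rt Hvq]] [u [le_nu Hxu Huv]].
  apply: clos_rt_step_rt Hxu _ Hvq.
  by rewrite (E_down_token (ltnW lt_vn) le_nu).
- case=> v [u [lt_vn lt_un <- /low_rt Hvu <-]] [w [le_nw Hxw Hwv]].
  exists u; split=> //; apply/clos_t_clos_rt/(clos_rt_step_rt Hxw _ Hvu).
  by rewrite (E_down_token (ltnW lt_vn) le_nw).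
Qed.

Lemma high_edge_reached n x y a b :
  high_edge (diag_state n) (above n x) (above n y) a b ->
  reached n x y a -> reached n x y b.
Proof.
have high_t := clos_trans_map (high_rel_sub (n := n)).
have high_rt := clos_refl_trans_map (high_rel_sub (n := n)).
case: a b => [| |t|t] [| |t'|t'] //=.
- by case=> p [q [/above_Some-> /above_Some-> /high_t]].
- case=> p [u [/above_Some-> /high_rt Hpu Hu]] _.
  by exists (n + u); rewrite addKn leq_addr.
- case=> v [q [/above_Some-> Hv /high_rt Hvq]] [u [lt_un Hxu Hut]].
  apply: clos_rt_step_rt Hxu _ Hvq.
  by rewrite (E_up_token (ltnW lt_un) (leq_addr v n)) addKn Hut.
- case=> v [u [Hv /high_rt Hvu Hu]] [w [lt_wn Hxw Hwt]].
  exists (n + u); rewrite addKn leq_addr; split=> //.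
  apply/clos_t_clos_rt/(clos_rt_step_rt Hxw _ Hvu).
  by rewrite (E_up_token (ltnW lt_wn) (leq_addr v n)) addKn Hwt.
Qed.

Lemma cut_graph_sound n x y :
  clos_trans (node Q) (cut_edge n x y) Start Stop -> clos_trans nat E x y.
Proof.
have reached_t a b : clos_trans _ (cut_edge n x y) a b ->
                     reached n x y a -> reached n x y b.
  elim=> [c d [/low_edge_reached|/high_edge_reached] //|c d e _ IH1 _ IH2].
  by move=> /IH1/IH2.
by move=> /reached_t; apply.
Qed.

(* [pending C n x a w]: the walk from [x] has reached [w] and its current stretch
   started at the token node [a]; [C] is the closure used while no token has
   been crossed yet. *)
Definition pending (C : relation nat -> relation nat) n x (a : node Q) w : Prop :=
  if w < n then
    match a with
    | Start => x < n /\ C (low_rel n) x w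
    | Down t => exists v, [/\ v < n, down_token n v = t
                            & clos_refl_trans nat (low_rel n) v w]
    | _ => False
    end
  else
    match a with
    | Start => n <= x /\ C (high_rel (diag_state n)) (x - n) (w - n)
    | Up t => exists v, F (foldl delta t (nseq v only2)) /\
                         clos_refl_trans nat (high_rel (diag_state n)) v (w - n)
    | _ => False
    end.

Definition visited C n x y w : Prop :=
  exists a, clos_refl_trans (node Q) (cut_edge n x y) Start a /\ pending C n x a w.

Local Notation visited_t := (visited (clos_trans nat)).
Local Notation visited_rt := (visited (clos_refl_trans nat)).

Lemma visited_rt_refl n x y : visited_rt n x y x.
Proof.
exists Start; split; first exact: rt_refl.
by rewrite /pending; case: ltnP => H; split=> //; apply: rt_refl.
Qed.

Lemma visited_rt_of_t n x y w : visited_t n x y w -> visited_rt n x y w.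
Proof.
case=> a [Ha Hw]; exists a; split=> //; move: Hw; rewrite /pending.
by case: ifP => _; case: a {Ha} => // -[H1 H2]; split=> //; apply: clos_t_clos_rt.
Qed.

Lemma visited_step_low n x y w w' : w < n -> visited_rt n x y w -> E w w' ->
  visited_t n x y w'.
Proof.
move=> lt_wn [a [Ha]]; rewrite /pending lt_wn => Hw Eww'.
have [lt_w'n|le_nw'] := ltnP w' n.
- exists a; split=> //; rewrite /pending lt_w'n.
  have Hl : low_rel n w w' by [].
  case: a Hw {Ha} => // [[lt_xn Hxw]|t [v [lt_vn Hv Hvw]]].
  + by split=> //; apply: clos_rt_t Hxw (t_step _ _ _ _ Hl).
  + by exists v; split=> //; apply: rt_trans Hvw (rt_step _ _ _ _ Hl).
- exists (Up (up_token n w)); split.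
    apply: rt_trans Ha (rt_step _ _ _ _ _); left.
    case: a Hw => // [[lt_xn Hxw]|t [v [lt_vn Hv Hvw]]].
    + by exists x, w; rewrite below_lt.
    + by exists v, w.
  rewrite /pending ltnNge le_nw' /=; exists (w' - n); split; last exact: rt_refl.
  by rewrite -E_up_token // ltnW.
Qed.

Lemma visited_step_high n x y w w' : n <= w -> visited_rt n x y w -> E w w' ->
  visited_t n x y w'.
Proof.
move=> le_nw [a [Ha]]; rewrite /pending ltnNge le_nw /= => Hw Eww'.
have [lt_w'n|le_nw'] := ltnP w' n.
- exists (Down (down_token n w')); split.
    apply: rt_trans Ha (rt_step _ _ _ _ _); right.
    case: a Hw => // [[le_nx Hxw]|t [v [Hv Hvw]]].
    + by exists (x - n), (w - n); rewrite above_ge // -E_down_token // ltnW.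
    + by exists v, (w - n); rewrite -E_down_token // ltnW.
  by rewrite /pending lt_w'n; exists w'; split=> //; apply: rt_refl.
- have Hh : high_rel (diag_state n) (w - n) (w' - n).
    by rewrite -E_shift !subnKC.
  exists a; split=> //; rewrite /pending ltnNge le_nw' /=.
  case: a Hw {Ha} => // [[le_nx Hxw]|t [v [Hv Hvw]]].
  + by split=> //; apply: clos_rt_t Hxw (t_step _ _ _ _ Hh).
  + by exists v; split=> //; apply: rt_trans Hvw (rt_step _ _ _ _ Hh).
Qed.

Lemma visited_step n x y w w' : visited_rt n x y w -> E w w' -> visited_t n x y w'.
Proof. by case: (ltnP w n) => [/visited_step_low|/visited_step_high]; apply. Qed.

Lemma visited_last n x y : visited_t n x y y ->
  clos_trans (node Q) (cut_edge n x y) Start Stop.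
Proof.
case=> a [Ha Hy]; apply: (clos_rt_t _ _ _ _ _ Ha); apply: t_step; move: Hy {Ha}.
rewrite /pending.
case: ltnP => [lt_yn|le_ny] Hy.
- left; case: a Hy => // [[lt_xn Hxy]|t [v [lt_vn Hv Hvy]]].
  + by exists x, y; rewrite !below_lt.
  + by exists v, y; rewrite below_lt.
- right; case: a Hy => // [[le_nx Hxy]|t [v [Hv Hvy]]].
  + by exists (x - n), (y - n); rewrite !above_ge.
  + by exists v, (y - n); rewrite above_ge.
Qed.

Theorem clos_trans_cut_graph n x y :
  clos_trans nat E x y <-> clos_trans (node Q) (cut_edge n x y) Start Stop.
Proof.
split; last exact: cut_graph_sound.
move=> Hxy; apply: visited_last.
suff visited_all w : clos_trans_n1 nat E x w -> visited_t n x y w.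
  exact/visited_all/clos_trans_tn1.
elim=> [w'|w' w'' Ew'w'' _ /visited_rt_of_t IH].
- exact: visited_step (visited_rt_refl n x y).
- exact: visited_step IH Ew'w''.
Qed.

End CutGraph.

(** * Regularity of the transitive closure *)

Section TransitiveClosure.
Variables (Q : finType) (q0 : Q) (delta : Q -> letter -> Q) (F : pred Q).
Local Notation E := (conv2_rel q0 delta F).

Local Notation state_type := (bool * bool * bool * Q * {set node Q * node Q})%type.

Definition prefix_state (u : seq letter) : state_type :=
  let n := size u in
  (u == conv2 (len1 u) (len2 u), n <= len1 u, n <= len2 u, diag_state q0 delta n,
   [set e | classic_bool (low_edge q0 delta F n (below n (len1 u)) (below n (len2 u))
                            e.1 e.2)]).

Definition state_edge (st : state_type) (v : seq letter) : relation (node Q) :=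
  let: (_, run1, run2, s, low) := st in
  fun a b => (a, b) \in low \/
             high_edge delta F s (if run1 then Some (len1 v) else None)
                       (if run2 then Some (len2 v) else None) a b.

Lemma cut_edge_prefix u v a b x y : u ++ v = conv2 a b ->
  cut_edge q0 delta F (size u) a b x y <-> state_edge (prefix_state u) v x y.
Proof.
move=> Euv; have [Eu Ev] := conv2_cat_split Euv.
rewrite /cut_edge /state_edge /prefix_state inE -(rwP (classic_boolP _)) /=.
have -> : len1 u = minn a (size u) by rewrite {1}Eu len1_conv2.
have -> : len2 u = minn b (size u) by rewrite {1}Eu len2_conv2.
by rewrite Ev len1_conv2 len2_conv2 !below_minn (above_minn _ a) (above_minn _ b).
Qed.

Lemma conv2_cat_prefix_state u u' v a b :
  u ++ v = conv2 a b -> prefix_state u = prefix_state u' ->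
  u' ++ v = conv2 (len1 u' + len1 v) (len2 u' + len2 v).
Proof.
move=> Euv; rewrite /prefix_state => -[conv_u' run1 run2 _ _].
have [Eu Ev] := conv2_cat_split Euv.
have len1u : len1 u = minn a (size u) by rewrite {1}Eu len1_conv2.
have len2u : len2 u = minn b (size u) by rewrite {1}Eu len2_conv2.
have {conv_u'} : u' == conv2 (len1 u') (len2 u') by rewrite -conv_u' len1u len2u -Eu.
move: run1 run2; rewrite len1u len2u Ev len1_conv2 len2_conv2.
set a' := len1 u'; set b' := len2 u' => run1 run2 /eqP Eu'.
rewrite Eu' cat_conv2 ?len1_conv2 ?len2_conv2 // => pos.
- have : size u <= minn a (size u) by lia.
  by rewrite run1 Eu' size_conv2; lia.
- have : size u <= minn b (size u) by lia.
  by rewrite run2 Eu' size_conv2; lia.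
Qed.

Theorem regular_clos_trans_conv2_rel :
  regular_lang (fun w => exists a b, w = conv2 a b /\ clos_trans nat E a b).
Proof.
apply: (@regular_of_finite_congruence _ _ _ prefix_state).
move=> u u' v Est [a [b [Euv Hab]]].
have Eu'v := conv2_cat_prefix_state Euv Est.
exists (len1 u' + len1 v), (len2 u' + len2 v); split=> //.
apply/(clos_trans_cut_graph _ _ _ (size u')).
move/(clos_trans_cut_graph _ _ _ (size u)): Hab.
apply: (clos_trans_map (f := id)) => x y.
by rewrite (cut_edge_prefix _ _ Euv) (cut_edge_prefix _ _ Eu'v) Est.
Qed.

End TransitiveClosure.

(** * Unary presentations *)

Section UnaryPresentation.
Variables (S : Type) (phi : {w : seq unit | True} -> S).

Definition unary_elt (k : nat) : S := phi (exist _ (nseq k tt) I).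

Lemma phi_unary_elt w : phi w = unary_elt (size (proj1_sig w)).
Proof. by case: w => l []; rewrite /unary_elt -unit_seqE. Qed.

Lemma Lambda_unary (R : ('I_2 -> S) -> Prop) ws :
  Lambda phi R ws <->
  R (of2 (unary_elt (size (ws ord0))) (unary_elt (size (ws ord_max)))).
Proof.
have phi_ws h : (fun i => phi (exist (fun _ => True) (ws i) (h i))) =
                of2 (unary_elt (size (ws ord0))) (unary_elt (size (ws ord_max))).
  apply: functional_extensionality => -[[|[|i]] lt_i2] //; rewrite phi_unary_elt /=;
    by congr (unary_elt (size (ws _))); apply: val_inj.
split=> [[h]|HR]; first by rewrite phi_ws.
by exists (fun _ => I); rewrite phi_ws.
Qed.

Lemma conv_Lambda_unary (R : ('I_2 -> S) -> Prop) w :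
  (exists ws, Lambda phi R ws /\ w = conv ws) <->
  (exists a b, w = conv2 a b /\ R (of2 (unary_elt a) (unary_elt b))).
Proof.
split=> [[ws [/Lambda_unary HR ->]]|[a [b [-> HR]]]].
  by exists (size (ws ord0)), (size (ws ord_max)); rewrite conv_unary.
exists (of2 (nseq a tt) (nseq b tt)).
by rewrite Lambda_unary conv_unary /= !size_nseq.
Qed.

End UnaryPresentation.

Theorem theorem4p6 (S : Type) (sig : sig_t S)
  (phi : {w : seq unit | True} -> S)
  (Hpres : FA_presentation sig phi) (Hinj : injective phi)
  (R : ('I_2 -> S) -> Prop) (HR : In (existT _ 2 R) sig) :
  let Rplus := binrel (clos_trans S (fun x y => R (of2 x y))) in
  regular_rel (Lambda phi Rplus) /\
  unary_FA_presentable (sig ++ (existT _ 2 Rplus :: nil)).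
Proof.
move=> Rplus; case: Hpres => reg_L phi_surj reg_eq Hsig.
have [Q [q0 [delta [F /= HR_dfa]]]] := Hsig _ HR.
set E := conv2_rel q0 delta F.
have E_R a b : E a b <-> R (of2 (unary_elt phi a) (unary_elt phi b)).
  rewrite /E /conv2_rel -HR_dfa conv_Lambda_unary.
  by split=> [[a' [b' [/conv2_inj[-> ->]]]] //|HRab]; exists a, b.
have elt_surj s : exists k, unary_elt phi k = s.
  by have [w <-] := phi_surj s; exists (size (proj1_sig w)); rewrite [RHS]phi_unary_elt.
have Rplus_E a b :
    Rplus (of2 (unary_elt phi a) (unary_elt phi b)) <-> clos_trans nat E a b.
  rewrite (clos_trans_ext E_R).
  exact: (clos_trans_pullback (fun x y => R (of2 x y)) elt_surj).
have reg_Rplus : regular_rel (Lambda phi Rplus).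
  apply: (regular_lang_ext _ (regular_clos_trans_conv2_rel q0 delta F)) => w.
  by rewrite conv_Lambda_unary; split=> -[a [b [-> /Rplus_E Hab]]]; exists a, b.
split=> //; exists (fun _ => True), phi; split=> // R' HR'.
by case: (in_app_or _ _ _ HR') => [/Hsig|[<-|[]]].
Qed.
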